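(* Let $R$ be a GCD-domain. Let $s_1,\dots,s_n\in(\operatorname{Sqf} R)\setminus R^{\ast}$ and $t_1,\dots,t_m\in(\operatorname{Sqf} R)\setminus R^{\ast}$ (with $n,m\geqslant 1$), let $k_1<k_2<\dots<k_n$ and $l_1<l_2<\dots<l_m$ be non-negative integers, and let $c,d\in R^{\ast}$. If $$c\,s_n^{2^{k_n}}s_{n-1}^{2^{k_{n-1}}}\cdots s_2^{2^{k_2}}s_1^{2^{k_1}}=d\,t_m^{2^{l_m}}t_{m-1}^{2^{l_{m-1}}}\cdots t_2^{2^{l_2}}t_1^{2^{l_1}},$$ then $n=m$, and $s_i\sim t_i$ and $k_i=l_i$ for $i=1,\dots,n$.
   Context: A GCD-domain is a commutative ring with identity without zero divisors in which the intersection of any two principal ideals is principal. $R^{\ast}$ denotes the set of invertible elements of $R$; $a\sim b$ means $a$ and $b$ are associated. An element $a\in R$ is square-free if it cannot be written as $a=b^2c$ with $b\in R\setminus R^{\ast}$ and $c\in R$; $\operatorname{Sqf} R$ denotes the set of square-free elements of $R$. *)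

From mathcomp Require Import all_boot all_order all_algebra.
Set Implicit Arguments. Unset Strict Implicit. Unset Printing Implicit Defensive.
Import GRing.Theory.
Local Open Scope ring_scope.

Definition rdvd (R : comRingType) (a b : R) : Prop := exists c : R, b = c * a.

(* R is a GCD-domain: the intersection of any two principal ideals is principal,
   i.e. aR ∩ bR = cR for some c. *)
Definition is_GCD_domain (R : idomainType) : Prop :=
  forall a b : R, exists c : R, forall x : R, (rdvd a x /\ rdvd b x) <-> rdvd c x.

Definition associated (R : comUnitRingType) (a b : R) : Prop :=
  exists u : R, u \is a GRing.unit /\ a = u * b.

Definition square_free (R : comUnitRingType) (a : R) : Prop :=
  ~ (exists b c : R, b \isn't a GRing.unit /\ a = b ^+ 2 * c).

(* Write [x ~ y] for association. The key fact, valid in any GCD-domain, is that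
   [a * Y^2 ~ b * Z^2] with [a], [b] square-free and [Y] nonzero forces [a ~ b] and
   [Y ~ Z]: after cancelling [gcd(Y, Z)^2] we get [a y^2 ~ b z^2] with [y], [z] coprime, so
   [y^2] divides [b] and [z^2] divides [a], whence [y] and [z] are units. In particular
   [x^(2^e) ~ w^(2^e)] implies [x ~ w] for [x] nonzero.
   A product [P = s_1^(2^k_1) * ... * s_n^(2^k_n)] with [k_1 < ... < k_n] can be written
   [(s_1 * Q^2)^(2^k_1)], with [Q] a product of the same shape built from the remaining
   factors. If two such products are associated, the smaller leading exponent, say [k_1 < l_1],
   would give [Q'^2 ~ t_1 * Q^2] after taking roots, making [t_1] a unit; so [k_1 = l_1],
   then [s_1 ~ t_1] and [Q ~ Q'], and we conclude by induction. *)
From mathcomp Require Import all_boot all_order all_algebra.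
From mathcomp Require Import ring zify.
Set Implicit Arguments. Unset Strict Implicit. Unset Printing Implicit Defensive.
Import GRing.Theory.
Local Open Scope ring_scope.

Section ComUnitRing.
Variable R : comUnitRingType.
Implicit Types a b c u : R.

Lemma assoc_sym a b : associated a b -> associated b a.
Proof. by move=> [u [uU ->]]; exists u^-1; rewrite unitrV mulKr. Qed.

Lemma assoc_trans a b c : associated a b -> associated b c -> associated a c.
Proof.
move=> [u [uU ->]] [v [vU ->]]; exists (u * v).
by rewrite unitrM uU vU mulrA.
Qed.

Lemma assoc_mulr_unit a u : u \is a GRing.unit -> associated (a * u) a.
Proof. by move=> uU; exists u; rewrite mulrC. Qed.

Lemma assoc1_unit a : associated a 1 -> a \is a GRing.unit.
Proof. by move=> [u [uU ->]]; rewrite mulr1. Qed.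

Lemma sqf1 : square_free (1 : R).
Proof.
move=> [b [c [/negP bNU e]]]; apply: bNU; apply/unitrP; exists (b * c).
by rewrite e; split; ring.
Qed.

Lemma sqf_sq_dvd_unit a y : square_free a -> rdvd (y ^+ 2) a -> y \is a GRing.unit.
Proof.
move=> sqf_a [c e]; apply/negPn/negP => yNU; apply: sqf_a.
by exists y, c; rewrite mulrC.
Qed.

End ComUnitRing.

Section GCDDomain.
Variable R : idomainType.
Hypothesis gcdR : is_GCD_domain R.
Implicit Types a b c u x y z : R.

Definition rcoprime a b := forall h, rdvd h a -> rdvd h b -> h \is a GRing.unit.

Lemma rcoprime_sym a b : rcoprime a b -> rcoprime b a.
Proof. by move=> cop h hb ha; apply: cop. Qed.

Lemma sqf_neq0 a : square_free a -> a != 0.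
Proof.
move=> sqf_a; apply/eqP => a0; apply: sqf_a.
by exists 0, 0; rewrite unitr0 a0 mulr0.
Qed.

Lemma assoc_mulIr a b c : c != 0 -> associated (a * c) (b * c) -> associated a b.
Proof.
move=> c0 [u [uU e]]; exists u; split=> //.
by apply: (mulIf c0); rewrite e mulrA.
Qed.

Lemma gcd_lcm_decomp (Y Z : R) : Y != 0 -> Z != 0 ->
  exists g y z, [/\ Y = g * y, Z = g * z, rcoprime y z &
    forall x, rdvd Y x /\ rdvd Z x <-> rdvd (g * y * z) x].
Proof.
move=> Y0 Z0; have [L lcmL] := gcdR Y Z.
have [[z eL1] [y eL2]] : rdvd Y L /\ rdvd Z L by apply/lcmL; exists 1; rewrite mul1r.
have [g eg] : rdvd L (Y * Z).
  by apply/lcmL; split; [exists Z; rewrite mulrC | exists Y].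
have eY : Y = g * y by apply: (mulIf Z0); rewrite eg eL2 mulrA.
have eZ : Z = g * z by apply: (mulfI Y0); rewrite eg eL1; ring.
have eL : L = g * y * z by rewrite eL1 eY mulrC.
exists g, y, z; split=> //; last by rewrite -eL.
move=> h [u eu] [v ev].
have [q eq] : rdvd L (g * u * v * h).
  by apply/lcmL; split; [exists v; rewrite eY eu | exists u; rewrite eZ ev]; ring.
have guvh0 : g * u * v * h != 0.
  move: Y0 Z0; rewrite eY eZ eu ev !mulf_eq0 !negb_or.
  by move=> /and3P[-> -> ->] /and3P[_ -> _].
have hq : h * q = 1.
  by apply: (mulIf guvh0); rewrite mul1r {2}eq eL eu ev; ring.
by apply/unitrP; exists q; rewrite mulrC hq.
Qed.

Lemma Gauss_rdvdr a b c : a != 0 -> b != 0 -> rcoprime a b ->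
  rdvd a (b * c) -> rdvd a c.
Proof.
move=> a0 b0 cop [r er].
have [g [a' [b' [ea eb _ lcm_ab]]]] := gcd_lcm_decomp a0 b0.
have gU : g \is a GRing.unit by apply: cop; [exists a' | exists b']; rewrite mulrC.
have [q eq] : rdvd (g * a' * b') (b * c).
  by apply/lcm_ab; split; [exists r | exists c; rewrite mulrC].
exists (q / g); apply: (mulfI b0).
by rewrite eq ea eb [q / g * _]mulrA divrK //; ring.
Qed.

Lemma rcoprime_sq_dvd y z c : y != 0 -> z != 0 -> rcoprime y z ->
  rdvd (y ^+ 2) (z ^+ 2 * c) -> rdvd (y ^+ 2) c.
Proof.
move=> y0 z0 cop [r er].
have dvd_y x : rdvd y (z * (z * x)) -> rdvd y x.
  by move=> dvd_zzx; do 2!apply: (Gauss_rdvdr y0 z0 cop).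
have [c1 ec] : rdvd y c by apply: dvd_y; exists (r * y); rewrite mulrA -expr2 er; ring.
have [c2 ec1] : rdvd y c1.
  apply: dvd_y; exists r; apply: (mulIf y0).
  transitivity (z ^+ 2 * c); first by rewrite ec; ring.
  by rewrite er; ring.
by exists c2; rewrite ec ec1 expr2 mulrA.
Qed.

Lemma rcoprime_sq_assoc_unit a b y z : square_free b -> y != 0 -> z != 0 ->
  rcoprime y z -> associated (a * y ^+ 2) (b * z ^+ 2) -> y \is a GRing.unit.
Proof.
move=> sqf_b y0 z0 cop [u [uU e]]; apply: sqf_sq_dvd_unit sqf_b _.
have [c ec] : rdvd (y ^+ 2) (u * b).
  by apply: (rcoprime_sq_dvd y0 z0 cop); exists a; rewrite e; ring.
by exists (u^-1 * c); rewrite -mulrA -ec mulKr.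
Qed.

Lemma assoc_sqf_mul_sq a b (Y Z : R) : square_free a -> square_free b ->
  Y != 0 -> associated (a * Y ^+ 2) (b * Z ^+ 2) ->
  associated a b /\ associated Y Z.
Proof.
move=> sqf_a sqf_b Y0 eYZ.
have Z0 : Z != 0.
  apply: contraNneq (mulf_neq0 (sqf_neq0 sqf_a) (expf_neq0 2 Y0)) => Z0.
  by case: eYZ => u [_ ->]; rewrite Z0 expr2 !mulr0.
have [g [y [z [eY eZ cop _]]]] := gcd_lcm_decomp Y0 Z0.
move: Y0 Z0 eYZ; rewrite eY eZ !mulf_eq0 !negb_or => /andP[g0 y0] /andP[_ z0].
have -> : a * (g * y) ^+ 2 = a * y ^+ 2 * g ^+ 2 by ring.
have -> : b * (g * z) ^+ 2 = b * z ^+ 2 * g ^+ 2 by ring.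
move=> /(assoc_mulIr (expf_neq0 2 g0)) e.
have yU := rcoprime_sq_assoc_unit sqf_b y0 z0 cop e.
have zU := rcoprime_sq_assoc_unit sqf_a z0 y0 (rcoprime_sym cop) (assoc_sym e).
split.
  apply: assoc_trans (assoc_sym (assoc_mulr_unit a (unitrX 2 yU))) _.
  exact: assoc_trans e (assoc_mulr_unit b (unitrX 2 zU)).
exact: assoc_trans (assoc_mulr_unit g yU) (assoc_sym (assoc_mulr_unit g zU)).
Qed.

Lemma assoc_pow2_inj e x y : x != 0 ->
  associated (x ^+ (2 ^ e)) (y ^+ (2 ^ e)) -> associated x y.
Proof.
move=> x0; elim: e => [|e IHe]; first by rewrite !expr1.
rewrite expnSr !exprM -[_ ^+ 2]mul1r -[X in associated _ X]mul1r => exy; apply: IHe.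
by have [] := assoc_sqf_mul_sq (@sqf1 R) (@sqf1 R) (expf_neq0 (2 ^ e) x0) exy.
Qed.

Lemma sqf_assoc_sq_unit b (Z W : R) : square_free b -> Z != 0 ->
  associated (b * Z ^+ 2) (W ^+ 2) -> b \is a GRing.unit.
Proof.
move=> sqf_b Z0; rewrite -[W ^+ 2]mul1r.
by move=> /(assoc_sqf_mul_sq sqf_b (@sqf1 R) Z0) [/assoc1_unit].
Qed.

Implicit Types (s t : nat -> R) (k l : nat -> nat).

Definition pow2prod s k n := \prod_(i < n) s i ^+ (2 ^ k i).

Definition increasing_below n k := forall i j, (i < j < n)%N -> (k i < k j)%N.

Definition sqf_nonunits n s :=
  forall i, (i < n)%N -> square_free (s i) /\ s i \isn't a GRing.unit.

Lemma pow2prod_recl s k n :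
  pow2prod s k n.+1 = s 0%N ^+ (2 ^ k 0%N) * pow2prod (fun i => s i.+1) (fun i => k i.+1) n.
Proof. by rewrite /pow2prod big_ord_recl. Qed.

Lemma pow2prod_sq_pow s k n e : (forall i, (i < n)%N -> (e < k i)%N) ->
  pow2prod s k n = (pow2prod s (fun i => k i - e.+1)%N n ^+ 2) ^+ (2 ^ e).
Proof.
move=> ltek; rewrite -exprM -expnS /pow2prod -prodrXl; apply: eq_bigr => i _.
by rewrite -exprM -expnD subnK ?ltek.
Qed.

Lemma increasing_below_head n k :
  increasing_below n.+1 k -> forall i, (i < n)%N -> (k 0%N < k i.+1)%N.
Proof. by move=> incr_k i lt_in; apply: incr_k. Qed.

Lemma increasing_below_tail n k : increasing_below n.+1 k ->
  increasing_below n (fun i => k i.+1 - (k 0%N).+1)%N.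
Proof.
move=> incr_k i j /andP[lt_ij lt_jn].
have := increasing_below_head incr_k (ltn_trans lt_ij lt_jn).
have : (k i.+1 < k j.+1)%N by apply: incr_k; rewrite ltnS lt_ij.
lia.
Qed.

Lemma pow2prod_head s k n : increasing_below n.+1 k ->
  pow2prod s k n.+1 = (s 0%N * pow2prod (fun i => s i.+1)
    (fun i => k i.+1 - (k 0%N).+1)%N n ^+ 2) ^+ (2 ^ k 0%N).
Proof.
move=> incr_k; rewrite pow2prod_recl exprMn; congr (_ * _).
exact/pow2prod_sq_pow/increasing_below_head.
Qed.

Lemma pow2prod0 s k : pow2prod s k 0 = 1.
Proof. by rewrite /pow2prod big_ord0. Qed.

Lemma pow2prod_sqf_neq0 n s k : sqf_nonunits n s -> pow2prod s k n != 0.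
Proof.
move=> sqf_s; apply/prodf_neq0 => i _; rewrite expf_neq0 // sqf_neq0 //.
by case: (sqf_s i (ltn_ord i)).
Qed.

Lemma sqf_nonunits_tail n s : sqf_nonunits n.+1 s -> sqf_nonunits n (fun i => s i.+1).
Proof. by move=> sqf_s i; exact: (sqf_s i.+1). Qed.

Lemma pow2prod_nonunit s k n :
  s 0%N \isn't a GRing.unit -> pow2prod s k n.+1 \isn't a GRing.unit.
Proof.
by move=> s0NU; rewrite pow2prod_recl unitrM unitrX_pos ?expn_gt0 // negb_and s0NU.
Qed.

Lemma head_exp_le n m s t k l : sqf_nonunits n.+1 s -> sqf_nonunits m.+1 t ->
  increasing_below n.+1 k -> increasing_below m.+1 l ->
  associated (pow2prod s k n.+1) (pow2prod t l m.+1) -> (k 0%N <= l 0%N)%N.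
Proof.
move=> sqf_s sqf_t incr_k incr_l; rewrite leqNgt => st; apply/negP => lt_lk.
have lt_l0k i : (i < n.+1)%N -> (l 0%N < k i)%N.
  case: i => // i /(increasing_below_head incr_k); exact: ltn_trans.
have [sqf_t0 /negP[]] := sqf_t 0%N isT.
have Ps k' := pow2prod_sqf_neq0 k' sqf_s.
have Pt k' := pow2prod_sqf_neq0 k' (sqf_nonunits_tail sqf_t).
move: st; rewrite (pow2prod_sq_pow s lt_l0k) (pow2prod_head t incr_l).
move=> /(assoc_pow2_inj (expf_neq0 2 (Ps _))) /assoc_sym.
exact: sqf_assoc_sq_unit sqf_t0 (Pt _).
Qed.

Lemma pow2prod_assoc_inj n m s t k l :
  sqf_nonunits n s -> sqf_nonunits m t -> increasing_below n k -> increasing_below m l ->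
  associated (pow2prod s k n) (pow2prod t l m) ->
  n = m /\ (forall i, (i < n)%N -> associated (s i) (t i) /\ k i = l i).
Proof.
elim: n m s t k l => [|n IHn] [|m] s t k l sqf_s sqf_t incr_k incr_l st.
- by split=> // i.
- case/negP: (pow2prod_nonunit l m (sqf_t 0%N isT).2).
  by apply/assoc1_unit/assoc_sym; rewrite pow2prod0 in st.
- case/negP: (pow2prod_nonunit k n (sqf_s 0%N isT).2).
  by apply/assoc1_unit; rewrite pow2prod0 in st.
have ekl0 : k 0%N = l 0%N.
  apply/eqP; rewrite eqn_leq (head_exp_le sqf_s sqf_t incr_k incr_l st).
  exact: head_exp_le sqf_t sqf_s incr_l incr_k (assoc_sym st).
have [sqf_s0 _] := sqf_s 0%N isT; have [sqf_t0 _] := sqf_t 0%N isT.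
have Ps k' := pow2prod_sqf_neq0 k' (sqf_nonunits_tail sqf_s).
move: st; rewrite (pow2prod_head s incr_k) (pow2prod_head t incr_l) [in (2 ^ k 0)%N]ekl0.
move=> /(assoc_pow2_inj (mulf_neq0 (sqf_neq0 sqf_s0) (expf_neq0 2 (Ps _)))).
move=> /(assoc_sqf_mul_sq sqf_s0 sqf_t0 (Ps _)) [st0 st'].
have [nm st_tail] := IHn m _ _ _ _ (sqf_nonunits_tail sqf_s) (sqf_nonunits_tail sqf_t)
  (increasing_below_tail incr_k) (increasing_below_tail incr_l) st'.
subst m; split=> // -[|i] lt_in //; have [st_i ekl] := st_tail i lt_in; split=> //.
have := increasing_below_head incr_k lt_in; have := increasing_below_head incr_l lt_in.
lia.
Qed.

End GCDDomain.

Theorem proposition2 (R : idomainType) (hR : is_GCD_domain R)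
  (n m : nat) (s t : nat -> R) (k l : nat -> nat) (c d : R)
  (hn : (1 <= n)%N) (hm : (1 <= m)%N)
  (hs : forall i, (i < n)%N -> square_free (s i) /\ s i \isn't a GRing.unit)
  (ht : forall j, (j < m)%N -> square_free (t j) /\ t j \isn't a GRing.unit)
  (hk : forall i j, (i < j < n)%N -> (k i < k j)%N)
  (hl : forall i j, (i < j < m)%N -> (l i < l j)%N)
  (hc : c \is a GRing.unit) (hd : d \is a GRing.unit)
  (heq : c * \prod_(i < n) s i ^+ (2 ^ k i) = d * \prod_(j < m) t j ^+ (2 ^ l j)) :
  n = m /\ (forall i, (i < n)%N -> associated (s i) (t i) /\ k i = l i).
Proof.
apply: (pow2prod_assoc_inj hR hs ht hk hl).
exists (c^-1 * d); split; first by rewrite unitrM unitrV hc hd.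
by rewrite /pow2prod -mulrA -heq mulKr.
Qed.
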